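(* Let $\mathbb{F}$ be a field and let $H\le\mathrm{GL}(n,\mathbb{F})$ be unipotent-by-abelian. Then $gh-hg\in\mathrm{Rad}\langle H\rangle_{\mathbb{F}}$ for all $g,h\in H$.
   Context: A group $H\le\mathrm{GL}(n,\mathbb{F})$ is unipotent-by-abelian if it has a unipotent normal subgroup with abelian quotient. $\langle H\rangle_{\mathbb{F}}$ denotes the $\mathbb{F}$-enveloping algebra of $H$ (the $\mathbb{F}$-subalgebra of $\mathrm{Mat}(n,\mathbb{F})$ generated by $H$), and $\mathrm{Rad}$ denotes its Jacobson radical. *)

From mathcomp Require Import all_boot all_order all_algebra.
Set Implicit Arguments. Unset Strict Implicit. Unset Printing Implicit Defensive.
Import GRing.Theory.
Local Open Scope ring_scope.

(* Subspaces of 'M[F]_n are represented, as in mxalgebra, by matrices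
   'A[F]_n whose row space (of mxvec-encoded matrices) is the subspace. *)

Section Defs.
Variables (F : fieldType) (n : nat).

Definition is_subalgebra (A : 'A[F]_n) : Prop :=
  (1%:M \in A)%MS /\ (mulsmx A A <= A)%MS.

Definition enveloping_algebra (H : 'M[F]_n -> Prop) (A : 'A[F]_n) : Prop :=
  [/\ is_subalgebra A,
      (forall h, H h -> (h \in A)%MS) &
      (forall B : 'A[F]_n, is_subalgebra B -> (forall h, H h -> (h \in B)%MS) ->
         (A <= B)%MS)].

Definition left_ideal (A L : 'A[F]_n) : Prop :=
  (L <= A)%MS /\ left_mx_ideal A L.

Definition maximal_left_ideal (A L : 'A[F]_n) : Prop :=
  [/\ left_ideal A L, ~~ (A <= L)%MS &
      (forall L' : 'A[F]_n, left_ideal A L' -> (L <= L')%MS ->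
         (L' == L)%MS \/ (L' == A)%MS)].

Definition in_jacobson_radical (A : 'A[F]_n) (x : 'M[F]_n) : Prop :=
  (x \in A)%MS /\ (forall L, maximal_left_ideal A L -> (x \in L)%MS).

Definition is_subgroup_GL (H : 'M[F]_n -> Prop) : Prop :=
  [/\ H 1%:M,
      (forall g, H g -> g \in unitmx),
      (forall g h, H g -> H h -> H (g *m h)) &
      (forall g, H g -> H (invmx g))].

Definition unipotent (u : 'M[F]_n) : Prop :=
  exists k : nat, (u - 1%:M) ^+ k = 0.

Definition unipotent_by_abelian (H : 'M[F]_n -> Prop) : Prop :=
  exists U : 'M[F]_n -> Prop,
    [/\ (forall u, U u -> H u),
        is_subgroup_GL U,
        (forall g u, H g -> U u -> U (invmx g *m u *m g)),
        (forall u, U u -> unipotent u) &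
        (forall g h, H g -> H h -> U (invmx g *m invmx h *m g *m h))].

End Defs.

From mathcomp Require Import all_boot all_order all_algebra qfpoly zify.
From Stdlib Require Import Classical.
Set Implicit Arguments. Unset Strict Implicit. Unset Printing Implicit Defensive.
Import GRing.Theory.
Local Open Scope ring_scope.

(* For g, h in H, g h - h g = h g (c - 1) with c = g^-1 h^-1 g h in U.  By
   Kolchin's theorem every product (u_1 - 1) ... (u_n - 1) with u_i in U
   vanishes.  As H normalises U, the enveloping algebra A preserves the flag
   V_k = {v | v kills all such products of length k}, and a (c - 1) maps V_k+1
   into V_k, so the left ideal A (g h - h g) is nil, hence contained in every
   maximal left ideal.  A
   proper U-stable subspace W splits the product into a part killing W and a
   part mapping into W (seen through the annihilator of W, stable under the
   transposes).  A non-scalar matrix c commuting with U becomes, after extending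
   scalars to F[X]/(q) for an irreducible factor q of its minimal polynomial,
   a matrix with a proper U-stable eigenspace.  Otherwise Jacobson density makes
   U span Mat(n,F), and the trace form, which vanishes on (s - 1) U, forces
   U = 1. *)

(** * Spans of sets of matrices *)

Section Spans.
Variables (F : fieldType) (m : nat).

Lemma submx_ind k (S : 'M[F]_(k, m)) (P : 'rV[F]_m -> Prop) :
  P 0 -> (forall a v w, P v -> P w -> P (a *: v + w)) ->
  (forall i, P (row i S)) -> forall v, (v <= S)%MS -> P v.
Proof.
move=> P0 PD PS v /submxP[w ->]; rewrite mulmx_sum_row.
elim/big_ind: _ => // [x y Px Py | i _].
  by rewrite -[x]scale1r; apply: PD.
by rewrite -[_ *: _]addr0; apply: PD.
Qed.

Lemma exists_spanning_rows (Q : 'rV[F]_m -> Prop) :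
  exists k (S : 'M[F]_(k, m)),
    (forall i, Q (row i S)) /\ (forall v, Q v -> (v <= S)%MS).
Proof.
suff grow k (S : 'M_(k, m)) : (forall i, Q (row i S)) ->
    exists k' (S' : 'M_(k', m)),
      (forall i, Q (row i S')) /\ (forall v, Q v -> (v <= S')%MS).
  by apply: (grow 0 0) => -[].
have [d] := ubnP (m - \rank S); elim: d k S => [|d IHd] k S // ltSd QS.
have [[v [Qv notSv]] | noQ] := classic (exists v, Q v /\ ~~ (v <= S)%MS); last first.
  exists k, S; split=> // v Qv; apply/negPn/negP=> notSv.
  by apply: noQ; exists v.
apply: (IHd _ (col_mx S v)).
  have ltSSv : (\rank S < \rank (col_mx S v))%N.
    by rewrite rank_ltmx // ltmxE col_mx_sub submx_refl notSv -addsmxE addsmxSl.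
  by have := rank_leq_col (col_mx S v); lia.
by move=> i; rewrite -[i]splitK; case: (split i) => j /=; rewrite ?rowKu ?rowKd ?row_id.
Qed.
End Spans.

Section MatrixSpan.
Variables (F : fieldType) (n : nat).
Implicit Types (P Q : 'M[F]_n -> Prop) (B : 'A[F]_n).

Definition mx_span P B :=
  (forall a, P a -> (a \in B)%MS) /\
  (forall Q, Q 0 -> (forall x a b, Q a -> Q b -> Q (x *: a + b)) ->
     (forall a, P a -> Q a) -> forall b, (b \in B)%MS -> Q b).

Lemma exists_mx_span P : exists B, mx_span P B.
Proof.
have [k [S [PS spanS]]] := exists_spanning_rows (fun r => P (vec_mx r)).
exists <<S>>%MS; split=> [a Pa | Q Q0 QD QP b]; rewrite genmxE.
  by apply: spanS; rewrite mxvecK.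
move=> Sb; rewrite -[b]mxvecK; move: Sb.
apply: (submx_ind (P := fun r => Q (vec_mx r))) => [|x v w|i].
- by rewrite linear0.
- by rewrite linearP; apply: QD.
by apply: QP.
Qed.

Lemma mx_span_subalgebra P B : mx_span P B ->
  P 1%:M -> (forall a b, P a -> P b -> P (a *m b)) -> is_subalgebra B.
Proof.
move=> [PB B_ind] P1 PM; split; first exact: PB.
have lin_closed (g : 'M[F]_n -> 'M[F]_n) :
    (forall x a b, g (x *: a + b) = x *: g a + g b) ->
    (forall a, P a -> (g a \in B)%MS) -> forall b, (b \in B)%MS -> (g b \in B)%MS.
  move=> gL gP; apply: B_ind => [|x a b Ba Bb|//].
    have := gL (-1) 0 0; rewrite scaler0 addr0 scaleN1r addNr => ->.
    by rewrite linear0 sub0mx.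
  by rewrite gL linearP addmx_sub ?scalemx_sub.
apply/mulsmx_subP => a b Ba Bb.
apply: (lin_closed (mulmx^~ b)) Ba => [x a1 a2|a1 Pa1].
  by rewrite mulmxDl scalemxAl.
apply: (lin_closed (mulmx a1)) Bb => [x b1 b2|b1 Pb1].
  by rewrite mulmxDr scalemxAr.
by apply: PB; apply: PM.
Qed.

End MatrixSpan.

Lemma subalgebra_mulmx (F : fieldType) n (B : 'A[F]_n) a b :
  is_subalgebra B -> (a \in B)%MS -> (b \in B)%MS -> (a *m b \in B)%MS.
Proof. by move=> [_ BB] Ba Bb; apply: submx_trans (mem_mulsmx Ba Bb) BB. Qed.

(** * Jacobson density *)

Section Density.
Variables (F : fieldType) (n : nat).

Definition irreducible_mxset (P : 'M[F]_n -> Prop) :=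
  forall m (W : 'M[F]_(m, n)), (forall a, P a -> stablemx W a) -> W = 0 \/ row_full W.

Definition scalar_commutant (P : 'M[F]_n -> Prop) :=
  forall c, (forall a, P a -> comm_mx c a) -> is_scalar_mx c.

Variable B : 'A[F]_n.
Hypothesis algB : is_subalgebra B.
Hypothesis irrB : irreducible_mxset (fun b => b \in B)%MS.
Hypothesis centB : scalar_commutant (fun b => b \in B)%MS.

Lemma commutant_module_map_sub k (phi : 'M[F]_(k, n) -> 'rV[F]_n) :
    {morph phi : Z1 Z2 / Z1 + Z2} -> (forall a, {morph phi : Z / a *: Z}) ->
    (forall Z b, (b \in B)%MS -> phi (Z *m b) = phi Z *m b) ->
  forall Z, (phi Z <= Z)%MS.
Proof.
move=> phiD phiZ phiB Z.
have phi0 : phi 0 = 0 by rewrite -(scale0r 0) phiZ scale0r.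
have phi_sum := big_morph phi phiD phi0.
pose E i (v : 'rV[F]_n) : 'M[F]_(k, n) := delta_mx i 0 *m v.
pose P i := \matrix_(j < n) phi (E i (delta_mx 0 j)).
have PE i v : v *m P i = phi (E i v).
  rewrite [in RHS](row_sum_delta v) /E mulmx_sumr phi_sum mulmx_sum_row.
  by apply: eq_bigr => j _; rewrite rowK -scalemxAr phiZ.
have cPB i b : (b \in B)%MS -> comm_mx (P i) b.
  move=> Bb; apply/row_matrixP => j; rewrite !row_mul rowK PE -phiB //.
  by rewrite /E -mulmxA -rowE.
have ZE : Z = \sum_i E i (row i Z).
  rewrite -[Z in LHS]mul1mx mx1_sum_delta mulmx_suml; apply: eq_bigr => i _.
  by rewrite /E rowE mulmxA mul_delta_mx.
rewrite ZE phi_sum summx_sub // => i _.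
rewrite -PE; have /is_scalar_mxP[a ->] := centB (cPB i).
by rewrite mul_mx_scalar scalemx_sub // -ZE row_sub.
Qed.

Lemma annihilator_sub_rowspace k (X : 'M[F]_(k, n)) (x : 'rV[F]_n) :
    (forall Z, exists b, (b \in B)%MS && (X *m b == Z)) ->
    (forall b, (b \in B)%MS -> X *m b = 0 -> x *m b = 0) ->
  (x <= X)%MS.
Proof.
(* Z |-> x b, for any b in B with X b = Z, is well defined and B-linear. *)
move=> ontoX annX; pose ch Z := xchoose (ontoX Z).
have chB Z : (ch Z \in B)%MS by have /andP[] := xchooseP (ontoX Z).
have XchE Z : X *m ch Z = Z by have /andP[_ /eqP] := xchooseP (ontoX Z).
pose phi Z := x *m ch Z.
have phiE b : (b \in B)%MS -> phi (X *m b) = x *m b.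
  move=> Bb; apply/eqP; rewrite -subr_eq0 -mulmxBr; apply/eqP/annX.
    by rewrite linearB addmx_sub ?eqmx_opp ?chB.
  by rewrite mulmxBr XchE subrr.
rewrite -[x]mulmx1 -(phiE _ algB.1) -[X in (_ <= X)%MS]mulmx1.
apply: commutant_module_map_sub => [Z1 Z2 | a Z | Z b Bb].
- rewrite -{1}(XchE Z1) -{1}(XchE Z2) -mulmxDr phiE ?mulmxDr //.
  by rewrite linearD addmx_sub ?chB.
- rewrite -{1}(XchE Z) scalemxAr phiE; first by rewrite /phi scalemxAr.
  by rewrite linearZ scalemx_sub ?chB.
- by rewrite -{1}(XchE Z) -mulmxA phiE ?mulmxA // (subalgebra_mulmx algB) ?chB.
Qed.

Lemma mx_density k (X : 'M[F]_(k, n)) :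
  row_free X -> forall Y, exists b, (b \in B)%MS && (X *m b == Y).
Proof.
elim: k X => [|k IHk] X freeX Y.
  by exists 1%:M; rewrite algB.1; apply/eqP/matrixP => -[].
set x := usubmx (X : 'M_(1 + k, n)); set X0 := dsubmx (X : 'M_(1 + k, n)).
have defX : X = col_mx x X0 by rewrite vsubmxK.
have [freeX0 notxX0] : row_free X0 /\ ~~ (x <= X0)%MS.
  have rkX : \rank (x + X0)%MS = k.+1 by rewrite addsmxE -defX; apply/eqP.
  have [le_rk _] := mxrank_adds_leqif x X0; have := rank_leq_row x.
  have := rank_leq_row X0; split; first by apply/eqP; lia.
  by apply/negP => /addsmx_idPr xX0; move: rkX; rewrite xX0; lia.
pose Q v := exists b, [/\ (b \in B)%MS, X0 *m b = 0 & v = x *m b].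
have [r [M [QM spanM]]] := exists_spanning_rows Q.
have QsubM : forall v, (v <= M)%MS -> Q v.
  apply: submx_ind => [|a _ _ [b [Bb X0b ->]] [c [Bc X0c ->]] | //].
    by exists 0; rewrite linear0 sub0mx !mulmx0.
  exists (a *: b + c); rewrite linearP /= addmx_sub ?scalemx_sub //.
  by rewrite !mulmxDr -!scalemxAr X0b X0c scaler0 addr0.
have stableM b : (b \in B)%MS -> stablemx M b.
  move=> Bb; apply/row_subP => i; rewrite row_mul; apply: spanM.
  have [c [Bc X0c ->]] := QM i.
  by exists (c *m b); rewrite subalgebra_mulmx // mulmxA X0c mul0mx mulmxA.
have [M0 | fullM] := irrB stableM.
  case/negP: notxX0; apply: annihilator_sub_rowspace (IHk X0 freeX0) _ => b Bb X0b.
  apply/eqP; rewrite -submx0 (submx_trans (spanM _ _)) ?M0 ?sub0mx //.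
  by exists b.
set y := usubmx (Y : 'M_(1 + k, n)); set Y0 := dsubmx (Y : 'M_(1 + k, n)).
have [b0 /andP[Bb0 /eqP X0b0]] := IHk X0 freeX0 Y0.
have [b1 [Bb1 X0b1 xb1]] := QsubM (y - x *m b0) (submx_full _ fullM).
exists (b0 + b1); rewrite linearD addmx_sub //= defX (mul_col_mx x X0).
by rewrite !mulmxDr X0b1 addr0 X0b0 -xb1 addrC subrK vsubmxK.
Qed.

End Density.

(** * Kolchin's theorem *)

Lemma mxtrace_nilpotent (F : fieldType) n (x : 'M[F]_n) k :
  x ^+ k = 0 -> \tr x = 0.
Proof.
(* ('X - x) (\sum_i 'X^(k-1-i) x^i) = 'X^k, so char_poly x divides 'X^(k n). *)
case: n x => [|n] x xk0; first by rewrite /mxtrace big_ord0.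
pose Cx := map_mx (@polyC F) x.
have cXx : GRing.comm ('X%:M : 'M_n.+1) Cx by apply: esym; apply: scalar_mxC.
have := subrXX_comm k cXx; rewrite -rmorphXn /= /Cx -rmorphXn /= xk0 map_mx0 subr0.
move=> /(congr1 determinant); rewrite det_mulmx det_scalar -exprM.
move=> dvd_char; have: char_poly x %| ('X - 0%:P) ^+ (k * n.+1).
  by rewrite subr0 dvd_char -/(char_poly_mx x) -/(char_poly x) dvdp_mulr.
case/dvdp_exp_XsubCP=> j _.
rewrite eqp_monic ?char_poly_monic ?monic_exp ?monicXsubC // subr0 => /eqP charE.
have := size_char_poly x; rewrite charE size_polyXn => -[jE].
apply/eqP; rewrite -oppr_eq0 -char_poly_trace // charE jE coefXn /=.
by rewrite eqn_leq ltnn andbF.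
Qed.

Lemma mxtrace_unipotent (F : fieldType) n (u : 'M[F]_n) :
  unipotent u -> \tr u = n%:R.
Proof.
case=> k /mxtrace_nilpotent; rewrite raddfB /= mxtrace1 => /eqP.
by rewrite subr_eq0 => /eqP.
Qed.

Lemma mxtrace_mul_delta (R : pzSemiRingType) n (A : 'M[R]_n) i j :
  \tr (A *m delta_mx j i) = A i j.
Proof.
rewrite /mxtrace (bigD1 i) //= big1 ?addr0 => [|k /negbTE ki].
  rewrite mxE (bigD1 j) //= big1 ?addr0 ?mxE ?eqxx ?mulr1 // => l /negbTE lj.
  by rewrite mxE lj mulr0.
by rewrite mxE big1 // => l _; rewrite mxE ki andbF mulr0.
Qed.

Lemma trmxX (R : comPzRingType) n (x : 'M[R]_n) k : (x ^+ k)^T = x^T ^+ k.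
Proof.
elim: k => [|k IHk]; first by rewrite !expr0 trmx1.
by rewrite exprS exprSr -IHk; apply: trmx_mul.
Qed.

Section UnipotentMonoid.
Variables (F : fieldType) (n : nat).
Implicit Types (U : 'M[F]_n -> Prop) (us : seq 'M[F]_n).

Definition unipotent_monoid U :=
  [/\ U 1%:M, (forall a b, U a -> U b -> U (a *m b)) & forall u, U u -> unipotent u].

Definition kolchin_property :=
  forall U, unipotent_monoid U ->
  forall us, size us = n -> (forall u, u \in us -> U u) ->
  \prod_(u <- us) (u - 1%:M) = 0.

Lemma trmx_prod_sub1 us :
  (\prod_(u <- us) (u - 1%:M))^T = \prod_(u <- rev (map trmx us)) (u - 1%:M).
Proof.
elim: us => [|u us IHus]; first by rewrite !big_nil trmx1.
rewrite big_cons rev_cons big_rcons /= -IHus.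
by rewrite (trmx_mul (u - 1%:M)) linearB /= trmx1.
Qed.

Lemma unipotent_monoid_tr U :
  unipotent_monoid U -> unipotent_monoid (fun y => U y^T).
Proof.
case=> U1 UM Uu; split=> [|a b Ua Ub|y /Uu[k uk]] /=; first by rewrite trmx1.
  by rewrite trmx_mul; apply: UM.
by exists k; rewrite -[y]trmxK -trmx1 -linearB /= -trmxX uk trmx0.
Qed.

End UnipotentMonoid.

Section Restriction.
Variables (F : fieldType) (n m : nat) (W : 'M[F]_(m, n)).
Implicit Types (f : 'M[F]_n) (U : 'M[F]_n -> Prop) (us : seq 'M[F]_n).

Lemma restrictmx_sub1 f : restrictmx W (f - 1%:M) = restrictmx W f - 1%:M.
Proof.
by rewrite /conjmx mulmxBr mulmxBl -(conjmx_scalar 1 (row_base_free W)).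
Qed.

Lemma restrictmxX f k :
  stablemx W f -> restrictmx W (f ^+ k) = restrictmx W f ^+ k.
Proof.
rewrite -stablemx_row_base => Wf; elim: k => [|k IHk].
  by rewrite !expr0 conjmx_scalar ?row_base_free.
have Wfk : stablemx (row_base W) (f ^+ k).
  by elim: (k) => [|j IHj]; rewrite ?expr0 ?stablemxC // exprSr stablemxM.
by rewrite !exprSr -IHk -[_ * _]/(_ *m _) conjmxM.
Qed.

Lemma unipotent_monoid_restrict U :
    unipotent_monoid U -> (forall u, U u -> stablemx W u) ->
  unipotent_monoid (fun y => exists2 u, U u & y = restrictmx W u).
Proof.
case=> U1 UM Uu WU; split=> [|_ _ [a Ua ->] [b Ub ->] | _ [u Uu' ->]].
- by exists 1%:M; rewrite ?conjmx_scalar ?row_base_free.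
- by exists (a *m b); [apply: UM | rewrite conjmxM // inE stablemx_row_base WU].
have [k uk] := Uu u Uu'; exists k.
rewrite -restrictmx_sub1 -restrictmxX ?uk ?conjmx0 //.
by rewrite stablemxD ?stablemxN ?stablemxC ?WU.
Qed.

Lemma restrictmx_prod_sub1 us : (forall u, u \in us -> stablemx W u) ->
  row_base W *m \prod_(u <- us) (u - 1%:M)
    = \prod_(u <- us) (restrictmx W u - 1%:M) *m row_base W.
Proof.
elim: us => [|u us IHus] Wus; first by rewrite !big_nil mulmx1 mul1mx.
have Wu1 : stablemx (row_base W) (u - 1%:M).
  by rewrite stablemx_row_base stablemxD ?stablemxN ?stablemxC ?Wus ?mem_head.
rewrite !big_cons -[_ * _]/(_ *m _) -[(restrictmx W u - _) * _]/(_ *m _).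
rewrite mulmxA -(mulmxKpV Wu1) -/(restrictmx W _) -mulmxA IHus.
  by rewrite restrictmx_sub1 mulmxA.
move=> v usv.
by rewrite Wus // in_cons usv orbT.
Qed.

Lemma stable_prod_sub1_eq0 U : kolchin_property F (\rank W) ->
    unipotent_monoid U -> (forall u, U u -> stablemx W u) ->
  forall us, size us = \rank W -> (forall u, u \in us -> U u) ->
  W *m \prod_(u <- us) (u - 1%:M) = 0.
Proof.
move=> kolW monoU WU us sz_us Uus.
have /submxP[D ->] : (W <= row_base W)%MS by rewrite eq_row_base.
rewrite -mulmxA restrictmx_prod_sub1 => [|u /Uus]; last exact: WU.
rewrite -(big_map _ xpredT (fun v => v - 1%:M)).
rewrite (kolW _ (unipotent_monoid_restrict monoU WU)) ?mul0mx ?mulmx0 ?size_map //.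
by move=> _ /mapP[u /Uus Uu ->]; exists u.
Qed.

End Restriction.

Section Annihilator.
Variables (F : fieldType) (m n : nat) (W : 'M[F]_(m, n)).

Lemma stablemx_kermx_tr f : stablemx W f -> stablemx (kermx W^T) f^T.
Proof.
case/submxP=> D WfE; apply/sub_kermxP.
rewrite -mulmxA -trmx_mul WfE trmx_mul mulmxA (_ : kermx W^T *m W^T = 0) ?mul0mx //.
exact: mulmx_ker.
Qed.

Lemma kermx_tr_kermx_tr_sub : (kermx (kermx W^T)^T <= W)%MS.
Proof.
have sWK : (W <= kermx (kermx W^T)^T)%MS.
  apply/sub_kermxP/trmx_inj; rewrite trmx_mul trmxK trmx0; exact: mulmx_ker.
have : (W == kermx (kermx W^T)^T)%MS.
  have rWo : \rank (kermx W^T) = (n - \rank W)%N by rewrite mxrank_ker mxrank_tr.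
  rewrite -(geq_leqif (mxrank_leqif_eq sWK)) mxrank_ker mxrank_tr rWo.
  by rewrite subKn ?rank_leq_col.
by case/andP.
Qed.

End Annihilator.

Lemma kolchin_reducible (F : fieldType) n (U : 'M[F]_n -> Prop)
    m (W : 'M[F]_(m, n)) :
    (forall r, (r < n)%N -> kolchin_property F r) ->
    unipotent_monoid U -> (forall u, U u -> stablemx W u) -> (0 < \rank W < n)%N ->
  forall us, size us = n -> (forall u, u \in us -> U u) ->
  \prod_(u <- us) (u - 1%:M) = 0.
Proof.
move=> IH monoU WU /andP[rW_gt0 rW_lt_n] us sz_us Uus.
rewrite -(cat_take_drop (n - \rank W) us) big_cat /=.
have Wus2 : W *m \prod_(u <- drop (n - \rank W) us) (u - 1%:M) = 0.
  apply: (stable_prod_sub1_eq0 (IH _ rW_lt_n) monoU WU (us := drop _ us)).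
    by rewrite size_drop sz_us (subKn (ltnW rW_lt_n)).
  by move=> u /mem_drop /Uus.
(* The first n - r factors map into W: their transposes kill the annihilator
   of W, which is stable under U^T and has rank n - r. *)
have Wous1 : kermx W^T *m (\prod_(u <- take (n - \rank W) us) (u - 1%:M))^T = 0.
  have rWo : \rank (kermx W^T) = (n - \rank W)%N by rewrite mxrank_ker mxrank_tr.
  rewrite trmx_prod_sub1.
  apply: (stable_prod_sub1_eq0 _ (unipotent_monoid_tr monoU)).
  - by rewrite rWo; apply: IH; rewrite ltn_subrL rW_gt0 (leq_ltn_trans _ rW_lt_n).
  - by move=> u Uu; rewrite -[u]trmxK; apply/stablemx_kermx_tr/WU.
  - rewrite size_rev size_map size_take sz_us rWo.
    by rewrite ltn_subrL rW_gt0 (leq_ltn_trans _ rW_lt_n).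
  by move=> v; rewrite mem_rev => /mapP[u /mem_take /Uus Uu ->]; rewrite trmxK.
have : (\prod_(u <- take (n - \rank W) us) (u - 1%:M) <= W)%MS.
  apply: submx_trans (kermx_tr_kermx_tr_sub W); apply/sub_kermxP.
  by rewrite -[X in X *m _]trmxK -trmx_mul Wous1 trmx0.
by case/submxP=> D ->; rewrite -[_ * _]/(_ *m _) -mulmxA Wus2 mulmx0.
Qed.

Lemma exists_irreducible_factor (F : fieldType) (p : {poly F}) :
  (1 < size p)%N -> exists2 q, irreducible_poly q & q %| p.
Proof.
have [k] := ubnP (size p); elim: k p => // k IHk p le_p_k p_gt1.
have [irr_p | red_p] := classic (irreducible_poly p); first by exists p.
have [q [q_n1 qp not_pq]] : exists q : {poly F}, [/\ size q != 1, q %| p & ~~ (q %= p)].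
  apply: NNPP => no_q; apply: red_p; split=> // q q_n1 qp.
  by apply/negPn/negP => not_pq; apply: no_q; exists q.
have p_neq0 : p != 0 by rewrite -size_poly_gt0 ltnW.
have q_gt1 : (1 < size q)%N.
  have : size q != 0.
    by apply: contra p_neq0; rewrite size_poly_eq0 => /eqP q0; rewrite -(dvd0p p) -q0.
  by case: (size q) q_n1 => [|[]].
have lt_qp : (size q < size p)%N.
  by rewrite ltn_neqAle dvdp_leq // andbT dvdp_size_eqp.
have [r irr_r rq] := IHk q (leq_trans lt_qp le_p_k) q_gt1.
by exists r; rewrite // (dvdp_trans rq).
Qed.

Lemma exists_monic_irreducible_factor (F : fieldType) (p : {poly F}) :
  (1 < size p)%N -> exists q, [/\ irreducible_poly q, q \is monic & q %| p].
Proof.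
case/exists_irreducible_factor=> q irr_q qp; have q_neq0 := irredp_neq0 irr_q.
have lq_neq0 : lead_coef q != 0 by rewrite lead_coef_eq0.
have qq : (lead_coef q)^-1 *: q %= q by rewrite eqp_scale ?invr_eq0.
exists ((lead_coef q)^-1 *: q); split.
- split=> [|d d_n1]; first by rewrite size_scale ?invr_eq0 ?irr_q.
  by rewrite (eqp_dvdr _ qq) => /(irr_q.2 _ d_n1) dq; rewrite (eqp_trans dq) // eqp_sym.
- by rewrite monicE lead_coefZ mulVf.
- by rewrite (eqp_dvdl _ qq).
Qed.

Lemma qfpoly_root (F : fieldType) (q : {poly F}) (hq : monic_irreducible_poly q) :
  root (map_poly (qfpoly_const hq) q) (in_qpoly q 'X).
Proof.
rewrite /root -in_qpoly_comp_horner comp_polyXr; apply/eqP/val_inj => /=.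
by rewrite mk_monicE // Pdiv.RingMonic.rmodpp ?hq.2.
Qed.

Lemma unipotent_monoid_map (aF rF : fieldType) (f : {rmorphism aF -> rF}) n
    (U : 'M[aF]_n -> Prop) :
  unipotent_monoid U -> unipotent_monoid (fun y => exists2 u, U u & y = map_mx f u).
Proof.
case=> U1 UM Uu; split=> [|_ _ [a Ua ->] [b Ub ->] | _ [u /Uu[k uk] ->]].
- by exists 1%:M; rewrite // map_mx1.
- by exists (a *m b); [apply: UM | rewrite map_mxM].
by exists k; rewrite -(map_mx1 f) -map_mxB -rmorphXn /= uk map_mx0.
Qed.

Lemma kolchin_nonscalar_commutant (F : fieldType) n (U : 'M[F]_n.+1 -> Prop) c :
    (forall (K : fieldType) r, (r < n.+1)%N -> kolchin_property K r) ->
    unipotent_monoid U -> (forall u, U u -> comm_mx c u) -> ~~ is_scalar_mx c ->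
  forall us, size us = n.+1 -> (forall u, u \in us -> U u) ->
  \prod_(u <- us) (u - 1%:M) = 0.
Proof.
move=> IH monoU cU nsc us sz_us Uus.
have [q [irr_q monic_q q_dvd]] :
    exists q, [/\ irreducible_poly q, q \is monic & q %| mxminpoly c].
  apply: exists_monic_irreducible_factor.
  by rewrite size_mxminpoly ltnS mxminpoly_nonconstant.
(* Over K = F[X]/(q) the class of X is an eigenvalue of c, whose eigenspace
   is U-stable and proper since c is not scalar. *)
pose hq : monic_irreducible_poly q := (irr_q, monic_q).
pose f : {rmorphism F -> {poly %/ q with hq}} := qfpoly_const hq.
set W := eigenspace (map_mx f c) (in_qpoly q 'X).
have W_neq0 : W != 0.
  rewrite -/(eigenvalue _ _) eigenvalue_root_min mxminpoly_map.
  by case/dvdpP: q_dvd => r ->; rewrite rmorphM rootM qfpoly_root orbT.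
have W_lt_n : (\rank W < n.+1)%N.
  rewrite mxrank_ker ltn_subrL /= andbT lt0n mxrank_eq0 subr_eq0.
  by apply: contra nsc => /eqP cE; rewrite -(map_mx_is_scalar f) cE scalar_mx_is_scalar.
have WU y : (exists2 u, U u & y = map_mx f u) -> stablemx W y.
  case=> u Uu ->; apply: comm_mx_stable_eigenspace.
  by rewrite /comm_mx -!map_mxM (cU u Uu).
apply: (@map_mx_inj _ _ f); rewrite map_mx0 rmorph_prod /=.
under eq_bigr do rewrite map_mxB map_mx1.
rewrite -(big_map (map_mx f) xpredT (fun v => v - 1%:M)).
apply: (kolchin_reducible (IH _) (unipotent_monoid_map f monoU) WU).
- by rewrite lt0n mxrank_eq0 W_neq0.
- by rewrite size_map.
by move=> v /mapP[u /Uus Uu ->]; exists u.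
Qed.

Lemma absolutely_irreducible_unipotent_trivial (F : fieldType) n (U : 'M[F]_n -> Prop) :
    unipotent_monoid U -> irreducible_mxset U -> scalar_commutant U ->
  forall s, U s -> s = 1%:M.
Proof.
move=> [U1 UM Uu] irrU centU s Us.
have [B spanB] := exists_mx_span U; have [UB B_ind] := spanB.
have algB := mx_span_subalgebra spanB U1 UM.
have fullB Y : (Y \in B)%MS.
  have free1 : row_free (1%:M : 'M[F]_n) by rewrite row_free_unit unitmx1.
  have [||b /andP[Bb /eqP]] := mx_density algB _ _ free1 Y.
  - by move=> m W WB; apply: irrU => u /UB; apply: WB.
  - by move=> c cB; apply: centU => u /UB; apply: cB.
  by rewrite mul1mx => <-.
have trB : forall b, (b \in B)%MS -> \tr ((s - 1%:M) *m b) = 0.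
  apply: (B_ind (fun b => \tr ((s - 1%:M) *m b) = 0)) => [|x a b tra trb|u Uu'].
  - by rewrite mulmx0 mxtrace0.
  - by rewrite mulmxDr -scalemxAr mxtraceD mxtraceZ tra trb mulr0 addr0.
  rewrite mulmxBl mul1mx mxtraceD raddfN /= !mxtrace_unipotent ?subrr //.
  - exact: Uu.
  - exact/Uu/UM.
apply/subr0_eq/matrixP => i j.
by rewrite -(mxtrace_mul_delta _ i j) trB ?fullB ?mxE.
Qed.

Theorem kolchin (F : fieldType) n : kolchin_property F n.
Proof.
elim/ltn_ind: n F => -[|n] IH F U monoU us sz_us Uus.
  by apply/matrixP => -[].
have [[m [W [WU rW]]] | irrU] := classic (exists m (W : 'M[F]_(m, n.+1)),
  (forall u, U u -> stablemx W u) /\ (0 < \rank W < n.+1)%N).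
  exact: kolchin_reducible (fun r lt_rn => IH r lt_rn F) monoU WU rW us sz_us Uus.
have [[c [cU nsc]] | centU] := classic (exists c : 'M[F]_n.+1,
  (forall u, U u -> comm_mx c u) /\ ~~ is_scalar_mx c).
  apply: (kolchin_nonscalar_commutant _ monoU cU nsc sz_us Uus) => K r lt_rn.
  exact: IH.
have U1 : forall u, U u -> u = 1%:M.
  apply: absolutely_irreducible_unipotent_trivial monoU _ _ => [m W WU | c cU].
    have [rW0 | rW_gt0] := posnP (\rank W).
      by left; apply/eqP; rewrite -mxrank_eq0 rW0.
    right; rewrite /row_full eqn_leq rank_leq_col leqNgt; apply/negP => rW_lt.
    by apply: irrU; exists m, W; rewrite rW_gt0 rW_lt.
  by apply/negPn/negP => nsc; apply: centU; exists c.
case: us sz_us Uus => // u us _ Uus.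
by rewrite big_cons (U1 u (Uus u (mem_head u us))) subrr mul0r.
Qed.

(** * The nil left ideal generated by a commutator *)

Lemma enveloping_algebra_ind (F : fieldType) n (H P : 'M[F]_n -> Prop) (A : 'A[F]_n) :
    enveloping_algebra H A ->
    P 1%:M -> (forall a b, P a -> P b -> P (a *m b)) ->
    (forall x a b, P a -> P b -> P (x *: a + b)) -> (forall h, H h -> P h) ->
  forall a, (a \in A)%MS -> P a.
Proof.
move=> [_ _ minA] P1 PM PD PH a Aa; have [B spanB] := exists_mx_span P.
have sAB : (A <= B)%MS.
  by apply: minA (mx_span_subalgebra spanB P1 PM) _ => h /PH /spanB.1.
apply: spanB.2 (submx_trans Aa sAB) => //.
by have := PD (-1) _ _ P1 P1; rewrite scaleN1r addNr.
Qed.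

Lemma conj_prod_sub1 (F : fieldType) n (h : 'M[F]_n) (us : seq 'M[F]_n) :
    h \in unitmx ->
  h *m \prod_(u <- us) (u - 1%:M)
    = \prod_(u <- map (fun u => h *m u *m invmx h) us) (u - 1%:M) *m h.
Proof.
move=> h_unit; elim: us => [|u us IHus]; first by rewrite !big_nil mulmx1 mul1mx.
rewrite /= !big_cons -[_ * _]/(_ *m _) -[(_ - _) * _]/(_ *m _) !mulmxA.
have -> : h *m (u - 1%:M) = (h *m u *m invmx h - 1%:M) *m h.
  by rewrite mulmxBl mulmxKV // mul1mx mulmxBr mulmx1.
by rewrite -mulmxA IHus mulmxA.
Qed.

Section NilpotentLeftIdeal.
Variables (F : fieldType) (n : nat) (H U : 'M[F]_n -> Prop) (A : 'A[F]_n).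
Hypotheses (groupH : is_subgroup_GL H) (monoU : unipotent_monoid U).
Hypothesis normalU : forall g u, H g -> U u -> U (invmx g *m u *m g).
Hypothesis envA : enveloping_algebra H A.

Definition kills_products k (v : 'rV[F]_n) :=
  forall us, size us = k -> (forall u, u \in us -> U u) ->
  v *m \prod_(u <- us) (u - 1%:M) = 0.

Lemma kills_products_mulmx : forall a, (a \in A)%MS ->
  forall k v, kills_products k v -> kills_products k (v *m a).
Proof.
pose P a := forall k v, kills_products k v -> kills_products k (v *m a).
apply: (enveloping_algebra_ind (P := P) envA)
  => [k v | a b Pa Pb k v | x a b Pa Pb k v | h Hh k v].
- by rewrite mulmx1.
- by rewrite mulmxA => /Pa /Pb.
- move=> /[dup] /Pa kva /Pb kvb us sz_us Uus.
  by rewrite mulmxDr -scalemxAr !mulmxDl -!scalemxAl kva // kvb // scaler0 addr0.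
case: groupH => _ H_unit _ H_inv kv us sz_us Uus.
rewrite -mulmxA conj_prod_sub1 ?H_unit // mulmxA kv ?mul0mx ?size_map //.
move=> _ /mapP[u /Uus Uu ->]; have := normalU (H_inv _ Hh) Uu.
by rewrite invmxK ?H_unit.
Qed.

Lemma mul_sub1_nilpotent a c :
  (a \in A)%MS -> U c -> (a *m (c - 1%:M)) ^+ n = 0.
Proof.
move=> Aa Uc.
have killsX k v : kills_products k v -> v *m (a *m (c - 1%:M)) ^+ k = 0.
  elim: k v => [|k IHk] v kv; first by rewrite expr0 -(kv [::]) ?big_nil.
  rewrite exprS -[_ * _]/(_ *m _) mulmxA mulmxA; apply: IHk => us sz_us Uus.
  rewrite -mulmxA; have kav := kills_products_mulmx Aa kv; have := kav (c :: us).
  by rewrite big_cons /= sz_us => ->// u; rewrite in_cons => /predU1P[->|/Uus].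
apply/row_matrixP => i; rewrite row0 rowE; apply: killsX => us sz_us Uus.
by rewrite (kolchin monoU sz_us Uus) mulmx0.
Qed.

End NilpotentLeftIdeal.

Lemma memmx_mulmxrP (F : fieldType) m n (A : 'A[F]_(m, n)) (x y : 'M[F]_n) :
  reflect (exists2 a, (a \in A)%MS & y = a *m x) (y \in A *m lin_mx (mulmxr x))%MS.
Proof.
apply: (iffP idP) => [/submxP[w] | [a Aa ->]].
  rewrite mulmxA => yE; exists (vec_mx (w *m A)); first by rewrite vec_mxK submxMl.
  by rewrite -[y]mxvecK yE mul_rV_lin mxvecK.
by rewrite -[mxvec _]/(mxvec (mulmxr x a)) -mul_vec_lin submxMr.
Qed.

Lemma nil_left_ideal_in_radical (F : fieldType) n (A : 'A[F]_n) x :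
    is_subalgebra A -> (x \in A)%MS ->
    (forall a, (a \in A)%MS -> exists k, (a *m x) ^+ k = 0) ->
  in_jacobson_radical A x.
Proof.
move=> algA Ax nilAx; split=> // L [[LA idL] notAL maxL].
have mulAL a l : (a \in A)%MS -> (l \in L)%MS -> (a *m l \in L)%MS.
  by move=> Aa Ll; apply: submx_trans (mem_mulsmx Aa Ll) idL.
have notL1 : ~~ (1%:M \in L)%MS.
  apply: contra notAL => L1; apply/memmx_subP => a Aa.
  by rewrite -[a]mulmx1 mulAL.
apply/negPn/negP => notLx.
pose L' := (L + A *m lin_mx (mulmxr x))%MS.
have idL' : left_ideal A L'.
  split.
    rewrite addsmx_sub LA; apply/memmx_subP => _ /memmx_mulmxrP[a Aa ->].
    exact: subalgebra_mulmx.
  apply/mulsmx_subP => a _ Aa /memmx_addsP[[l _] [/= Ll /memmx_mulmxrP[b Ab ->] ->]].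
  rewrite mulmxDr linearD addmx_sub_adds ?mulAL // mulmxA.
  by apply/memmx_mulmxrP; exists (a *m b); rewrite ?subalgebra_mulmx.
have [/eqmxP eqL'L | /eqmxP eqL'A] := maxL L' idL' (addsmxSl _ _).
  case/negP: notLx; rewrite -eqL'L; apply: submx_trans (addsmxSr _ _).
  by apply/memmx_mulmxrP; exists 1%:M; rewrite ?mul1mx ?algA.1.
have : (1%:M \in L')%MS by rewrite eqL'A algA.1.
case/memmx_addsP=> -[l _] [/= Ll /memmx_mulmxrP[a Aa ->] oneE].
have [k nil_ax] := nilAx a Aa; set y := a *m x in oneE nil_ax.
have Ly j : (1%:M - y ^+ j.+1 \in L)%MS.
  elim: j => [|j IHj]; first by rewrite expr1 oneE addrK.
  have -> : 1%:M - y ^+ j.+2 = y *m (1%:M - y ^+ j.+1) + (1%:M - y).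
    by rewrite mulmxBr mulmx1 -[y *m _]/(y * _) -exprS [RHS]addrC addrA subrK.
  rewrite linearD addmx_sub ?mulAL ?subalgebra_mulmx //.
  by rewrite oneE addrK.
case/negP: notL1; have := Ly k; rewrite exprSr -[_ * y]/(_ *m _).
by rewrite nil_ax mul0mx subr0.
Qed.

Theorem lemma3p1 (F : fieldType) (n : nat) (H : 'M[F]_n -> Prop)
    (A : 'A[F]_n) :
  is_subgroup_GL H -> unipotent_by_abelian H -> enveloping_algebra H A ->
  forall g h, H g -> H h -> in_jacobson_radical A (g *m h - h *m g).
Proof.
move=> groupH [U [UH [U1 _ UM _] normalU unipU commU]] envA g h Hg Hh.
have monoU : unipotent_monoid U by split.
have [_ H_unit _ _] := groupH.
have [algA AH _] := envA.
set c := invmx g *m invmx h *m g *m h.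
have commE : g *m h - h *m g = h *m g *m (c - 1%:M).
  by rewrite mulmxBr mulmx1 /c !mulmxA mulmxK ?H_unit // mulmxV ?H_unit // mul1mx.
have Uc : U c by apply: commU.
have Ac1 : (c - 1%:M \in A)%MS.
  by rewrite linearB addmx_sub ?eqmx_opp //; apply/AH/UH.
have Ahg : (h *m g \in A)%MS by apply: subalgebra_mulmx => //; apply: AH.
rewrite commE; apply: nil_left_ideal_in_radical => [//||a Aa].
  exact: subalgebra_mulmx.
exists n; rewrite mulmxA; apply: (mul_sub1_nilpotent groupH monoU normalU envA) Uc.
exact: subalgebra_mulmx.
Qed.
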